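(* Let $G=(V,v,E)$ be a directed graph with node set $V=\{1,\dots,n\}$, target node $v$ and edge set $E$, and let $Z$ be a set of ordered node pairs with $Z\cap E=\emptyset$. For $\mathbf{y}\in\{0,1\}^{Z}$ with support $Y$, let $\mathcal{FR}(\mathbf{y})\ge0$ be the expected first return time to $v$ of the PageRank random walk on $(V,E\cup Y)$. Let $\mathcal{Y}$ be a constraint set with $\mathcal{Y}\cap\{0,1\}^{Z}\ne\emptyset$, and for disjoint $S,N\subseteq Z$ let $\gamma(S,N)=\min\{\mathcal{FR}(\mathbf{y}): y_e=1\ \forall e\in S,\ y_e=0\ \forall e\in N,\ \mathbf{y}\in\{0,1\}^{Z}\}$. Let $\bar{\mathbf{y}}\in\mathcal{Y}\cap\{0,1\}^{Z}$ with support $\bar Y$, and let $e^1,e^2,\dots,e^{K}$ ($K=|Z\setminus\bar Y|$) be an arbitrary ordering of the edges of $Z\setminus\bar Y$. For $r=1,\dots,K$ define $$\hat\pi_{e^r}(\bar{\mathbf{y}})=\min\Big\{0,\,-\mathcal{FR}(\bar{\mathbf{y}})+\min\{\mathcal{FR}(\mathbf{y}): y_{e^r}=1,\ y_{e^k}=0\ (k=r+1,\dots,K),\ \mathbf{y}\in\{0,1\}^{Z}\}\Big\}=\min\Big\{0,\,-\mathcal{FR}(\bar{\mathbf{y}})+\gamma\big(\{e^r\},\{e^{r+1},\dots,e^{K}\}\big)\Big\}.$$ Then the inequality $$\theta\ \ge\ \mathcal{FR}(\bar{\mathbf{y}})+\sum_{e\in\bar Y}\min\{0,\gamma(\emptyset,\{e\})-\mathcal{FR}(\bar{\mathbf{y}})\}(1-y_e)+\sum_{k=1}^{K}\hat\pi_{e^k}(\bar{\mathbf{y}})\,y_{e^k}$$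 is valid, i.e. it is satisfied by every pair $(\theta,\mathbf{y})$ with $\mathbf{y}\in\mathcal{Y}\cap\{0,1\}^{Z}$, $\theta\in\mathbb{R}_+$ and $\theta\ge\mathcal{FR}(\mathbf{y})$.
   Context: The PageRank random walk is the random walk defined by the PageRank (Google) matrix with fixed damping and teleportation, as in Csáji–Jungers–Blondel; the expected first return time to $v$ is the expected number of steps for the walk started at $v$ to return to $v$ (the reciprocal of $v$'s PageRank). The underlying problem is $\min\{\mathcal{FR}(\mathbf{y}):\mathbf{y}\in\mathcal{Y}\cap\{0,1\}^{Z}\}$ in epigraph form with variable $\theta$. *)

From HB Require Import structures.
From mathcomp Require Import all_boot all_order all_algebra.
From mathcomp Require Import reals.
Set Implicit Arguments. Unset Strict Implicit. Unset Printing Implicit Defensive.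
Import Order.TTheory GRing.Theory Num.Theory.
Local Open Scope ring_scope.

Section PageRank.
Variables (R : realType) (n : nat).
Notation V := 'I_n.

Definition outdeg (A : {set V * V}) (i : V) : nat := #|[set j | (i, j) \in A]|.

(* random-walk transition matrix; dangling nodes jump according to the
   teleportation distribution z *)
Definition walk (z : V -> R) (A : {set V * V}) (i j : V) : R :=
  if outdeg A i == 0%N then z j
  else if (i, j) \in A then (outdeg A i)%:R^-1 else 0.

Definition google (c : R) (z : V -> R) (A : {set V * V}) (i j : V) : R :=
  (1 - c) * walk z A i j + c * z j.

(* p is the PageRank vector: a stationary probability distribution of the
   Google matrix (it is unique when 0 < c and z > 0) *)
Definition is_pagerank (c : R) (z : V -> R) (A : {set V * V}) (p : V -> R) : Prop :=
  [/\ forall i, 0 <= p i, \sum_i p i = 1 &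
      forall j, p j = \sum_i p i * google c z A i j].

(* expected first return time to v = reciprocal of v's PageRank *)
Definition first_return (p : V -> R) (v : V) : R := (p v)^-1.

(* binary vector y in {0,1}^Z, given by its support Y, as a real vector *)
Definition indic (Y : {set V * V}) (e : V * V) : R := if e \in Y then 1 else 0.

(* gamma(S,N) = min { F(y) : y in {0,1}^Z, y_e = 1 on S, y_e = 0 on N };
   the default value of the finite minimum (max of F and 0) is irrelevant
   whenever the feasible set is nonempty (e.g. S, N disjoint subsets of Z) *)
Definition gamma (F : {set V * V} -> R) (Z S N : {set V * V}) : R :=
  \big[Order.min/ \big[Order.max/0]_(Y : {set V * V}) F Y]_(Y : {set V * V} |
     [&& Y \subset Z, S \subset Y & [disjoint N & Y]]) F Y.

End PageRank.

(** All coefficients are nonpositive, so it suffices to find one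
    active term bounded by [FR Y - FR Ybar].  If [Y] contains some [e k], take
    the largest such [k = r]: [Y] then avoids [e (r+1), ..., e K] and contains
    [e r], so it is feasible for the [gamma] defining [pihat r].  Otherwise
    [Y] avoids all of [Z :\: Ybar], so [Y \subset Ybar]; either [Y = Ybar], or
    some [f] in [Ybar :\: Y] makes [Y] feasible for [gamma set0 [set f]]. *)

From HB Require Import structures.
From mathcomp Require Import all_boot all_order all_algebra.
From mathcomp Require Import reals.
Set Implicit Arguments. Unset Strict Implicit. Unset Printing Implicit Defensive.
Import Order.TTheory GRing.Theory Num.Theory.
Local Open Scope ring_scope.

Lemma sumr_le_term (R : numDomainType) (I : finType) (P : pred I) (F : I -> R)
    (i0 : I) (d : R) :
  P i0 -> F i0 <= d -> (forall i, P i -> F i <= 0) -> \sum_(i | P i) F i <= d.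
Proof.
move=> Pi0 Fi0d Fle0; rewrite (bigD1 i0) //= -[d]addr0 lerD //.
by apply: sumr_le0 => i /andP[Pi _]; apply: Fle0.
Qed.

Lemma min0_mulr_le0 (R : realDomainType) (a x : R) :
  0 <= x -> Order.min 0 a * x <= 0.
Proof. by apply: mulr_le0_ge0; rewrite ge_min lexx. Qed.

Lemma indic_ge0 (R : realType) (n : nat) (Y : {set 'I_n * 'I_n}) f :
  0 <= indic R Y f.
Proof. by rewrite /indic; case: (f \in Y). Qed.

Lemma subr_indic_ge0 (R : realType) (n : nat) (Y : {set 'I_n * 'I_n}) f :
  0 <= 1 - indic R Y f.
Proof. by rewrite /indic; case: (f \in Y); rewrite ?subrr ?subr0. Qed.

Lemma gamma_le (R : realType) (n : nat) (F : {set 'I_n * 'I_n} -> R)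
    (Z S N Y : {set 'I_n * 'I_n}) :
  Y \subset Z -> S \subset Y -> [disjoint N & Y] -> gamma F Z S N <= F Y.
Proof. by move=> sYZ sSY dNY; apply: bigmin_le_cond; rewrite sYZ sSY dNY. Qed.

Section ValidCut.
Variables (R : realType) (n : nat) (F : {set 'I_n * 'I_n} -> R).
Variables (Z Ybar Y : {set 'I_n * 'I_n}) (K : nat) (e : 'I_K -> 'I_n * 'I_n).
Hypothesis sYZ : Y \subset Z.

Definition drop_coef (f : 'I_n * 'I_n) : R :=
  Order.min 0 (gamma F Z set0 [set f] - F Ybar).

Definition add_coef (r : 'I_K) : R :=
  Order.min 0 (- F Ybar + gamma F Z [set e r] [set e k | k : 'I_K & (r < k)%N]).

Lemma drop_sum_le0 : \sum_(f in Ybar) drop_coef f * (1 - indic R Y f) <= 0.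
Proof. by apply: sumr_le0 => f _; apply/min0_mulr_le0/subr_indic_ge0. Qed.

Lemma add_sum_le0 : \sum_(k < K) add_coef k * indic R Y (e k) <= 0.
Proof. by apply: sumr_le0 => k _; apply/min0_mulr_le0/indic_ge0. Qed.

Lemma add_sum_le (k0 : 'I_K) : e k0 \in Y ->
  \sum_(k < K) add_coef k * indic R Y (e k) <= F Y - F Ybar.
Proof.
move=> Yk0; pose r := [arg max_(k > k0 | e k \in Y) (k : nat)].
have [Yr rmax] : e r \in Y /\ forall k : 'I_K, e k \in Y -> (k <= r)%N.
  by rewrite /r; case: arg_maxnP => // i Yi imax; split => // k /imax.
have dYr : [disjoint [set e k | k : 'I_K & (r < k)%N] & Y].
  apply/pred0P => f /=; apply/negbTE/andP => -[/imsetP[k]].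
  by rewrite inE => rk -> /rmax; rewrite leqNgt rk.
apply: (sumr_le_term (P := xpredT) (i0 := r)) => [//||k _]; last first.
  by apply/min0_mulr_le0/indic_ge0.
rewrite /indic Yr mulr1 ge_min [- F Ybar + _]addrC lerD2r.
by rewrite (gamma_le _ sYZ) ?sub1set ?orbT.
Qed.

Lemma drop_sum_le : Y \subset Ybar ->
  \sum_(f in Ybar) drop_coef f * (1 - indic R Y f) <= F Y - F Ybar.
Proof.
move=> sYYbar; have [f /andP[Y'f Ybar_f] | noDrop] := pickP [predD Ybar & Y].
  apply: (sumr_le_term (P := [in Ybar]) (i0 := f)) => [//||g _]; last first.
    by apply/min0_mulr_le0/subr_indic_ge0.
  rewrite /indic (negbTE Y'f) subr0 mulr1 ge_min lerD2r.
  by rewrite (gamma_le _ sYZ) ?sub0set ?disjoints1 ?orbT.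
have YE : Y = Ybar.
  apply/eqP; rewrite eqEsubset sYYbar; apply/subsetP => f Ybar_f.
  by move: (noDrop f) => /= /negbT; rewrite negb_and Ybar_f orbF negbK.
by rewrite [in F Y]YE subrr drop_sum_le0.
Qed.

Hypotheses (cardK : K = #|Z :\: Ybar|) (inj_e : injective e).
Hypothesis eZ : forall k, e k \in Z :\: Ybar.

Lemma imset_enum_added : [set e k | k : 'I_K] = Z :\: Ybar.
Proof.
apply/eqP; rewrite eqEcard card_imset // card_ord -cardK leqnn andbT.
by apply/subsetP => _ /imsetP[k _ ->].
Qed.

Lemma sub_Ybar_of_no_added : (forall k, e k \notin Y) -> Y \subset Ybar.
Proof.
move=> noAdd; apply/subsetP => f Yf; apply: contraT => Ybar'f.
have : f \in Z :\: Ybar by rewrite inE Ybar'f (subsetP sYZ).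
rewrite -imset_enum_added => /imsetP[k _ fek].
by move: (noAdd k); rewrite -fek Yf.
Qed.

Lemma cut_le :
  F Ybar + \sum_(f in Ybar) drop_coef f * (1 - indic R Y f)
    + \sum_(k < K) add_coef k * indic R Y (e k) <= F Y.
Proof.
set D := \sum_(f in Ybar) _; set A := \sum_(k < K) _.
suff : D + A <= F Y - F Ybar by rewrite -addrA lerBrDl addrC.
have [k0 Yk0 | noAdd] := pickP (fun k => e k \in Y).
  by rewrite -[_ - _]add0r lerD ?drop_sum_le0 ?(add_sum_le Yk0).
rewrite -[_ - _]addr0 lerD ?add_sum_le0 ?drop_sum_le //.
by apply: sub_Ybar_of_no_added => k; rewrite noAdd.
Qed.

End ValidCut.

Theorem theorem2 (R : realType) (n : nat) (v : 'I_n)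
  (E Z : {set 'I_n * 'I_n}) (c : R) (z : 'I_n -> R)
  (pr : {set 'I_n * 'I_n} -> 'I_n -> R)
  (Ycal : ('I_n * 'I_n -> R) -> Prop)
  (Ybar : {set 'I_n * 'I_n}) (K : nat) (e : 'I_K -> 'I_n * 'I_n)
  (theta : R) (Y : {set 'I_n * 'I_n}) :
  0 < c < 1 ->
  (forall i, 0 < z i) -> \sum_i z i = 1 ->
  [disjoint Z & E] ->
  (forall Y' : {set 'I_n * 'I_n}, Y' \subset Z -> is_pagerank c z (E :|: Y') (pr Y')) ->
  (exists Y' : {set 'I_n * 'I_n}, Y' \subset Z /\ Ycal (indic R Y')) ->
  Ybar \subset Z -> Ycal (indic R Ybar) ->
  K = #|Z :\: Ybar| -> injective e -> (forall k, e k \in Z :\: Ybar) ->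
  let FR := fun Y' : {set 'I_n * 'I_n} => first_return (pr Y') v in
  let pihat := fun r : 'I_K =>
    Order.min 0 (- FR Ybar + gamma FR Z [set e r] [set e k | k : 'I_K & (r < k)%N]) in
  Y \subset Z -> Ycal (indic R Y) -> 0 <= theta -> FR Y <= theta ->
  FR Ybar
  + \sum_(f in Ybar) Order.min 0 (gamma FR Z set0 [set f] - FR Ybar) * (1 - indic R Y f)
  + \sum_(k < K) pihat k * indic R Y (e k)
  <= theta.
Proof.
move=> _ _ _ _ _ _ _ _ cardK inj_e eZ FR pihat sYZ _ _ FR_le.
exact: le_trans (cut_le FR sYZ cardK inj_e eZ) FR_le.
Qed.
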